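(* Let $U$ be a unitary on a finite-dimensional Hilbert space $\mathcal{H}$ and consider a verification protocol for $U$ with set of test states $\mathscr{T}=\{|\psi_j\rangle\}_j$ and effective set $\mathscr{T}_{\mathrm{eff}}$. (i) If $U$ can be verified reliably by this protocol, then $\mathscr{T}$ is an identification set for $U$. (ii) If $\mathscr{T}_{\mathrm{eff}}$ is an identification set for $U$, then $U$ can be verified reliably by this protocol. (iii) If the protocol is ordinary, then $U$ can be verified reliably by it if and only if $\mathscr{T}$ is an identification set for $U$.
   Context: A verification protocol for $U$ consists of a finite set $\mathscr{T}=\{|\psi_j\rangle\}$ of pure test states, each chosen with probability $p_j>0$, and for each $j$ a verification operator $\Omega_j=\sum_lq_{jl}E_{jl}$ for the output state $U|\psi_j\rangle$, where each $E_{jl}$ satisfies $0\le E_{jl}\le I$ and $E_{jl}U|\psi_j\rangle=U|\psi_j\rangle$, and $q_{jl}>0$ sum to 1. A quantum channel $\Lambda$ passes test $j$ with probability $\mathrm{tr}[\Omega_j\Lambda(|\psi_j\rangle\langle\psi_j|)]$. $U$ is verified reliably if the unitary channel $\rho\mapsto U\rho U^\dagger$ is the only quantum channel on $\mathcal{H}$ passing every test with certainty. Let $\nu_j=1-\beta(\Omega_j)$, where $\beta(\Omega_j)$ is the second largest eigenvalue of $\Omega_j$; $|\psi_j\rangle$ is effective if $\nu_j>0$, $\mathscr{T}_{\mathrm{eff}}$ is the set of effective test states, and the protocol is ordinary if all $\nu_j>0$. A set $\mathscr{S}$ of pure states is an identification set for $U$ if every quantum channel $\Lambda$ with $\Lambda(|\psi\rangle\langle\psi|)=U|\psi\rangle\langle\psi|U^\dagger$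 for all $|\psi\rangle\in\mathscr{S}$ satisfies $\Lambda(\rho)=U\rho U^\dagger$ for all density operators $\rho$ on $\mathcal{H}$. *)

(* matrices over an arbitrary numClosedFieldType C (e.g. algC,
   or complex R for R : rcfType), playing the role of the complex field. *)
From HB Require Import structures.
From mathcomp Require Import all_boot all_order all_algebra.
Set Implicit Arguments. Unset Strict Implicit. Unset Printing Implicit Defensive.
Import Order.TTheory GRing.Theory Num.Theory.
Local Open Scope ring_scope.
Local Open Scope sesquilinear_scope.

Section QDefs.
Variable C : numClosedFieldType.
Variable n : nat.

(* positive semidefinite: <v, A v> >= 0 for all v (this forces Hermiticity over C) *)
Definition psdmx (A : 'M[C]_n) : Prop :=
  forall v : 'cV[C]_n, 0 <= (v ^t* *m A *m v) 0 0.

Definition density (rho : 'M[C]_n) : Prop := psdmx rho /\ \tr rho = 1.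

Definition pure_state (psi : 'cV[C]_n) : Prop := psi ^t* *m psi = 1.
Definition proj (psi : 'cV[C]_n) : 'M[C]_n := psi *m psi ^t*.

(* quantum channel on L(H): completely positive trace-preserving map,
   given in operator-sum (Kraus) form *)
Definition quantum_channel (Lam : 'M[C]_n -> 'M[C]_n) : Prop :=
  exists (k : nat) (K : 'I_k -> 'M[C]_n),
    \sum_(i < k) (K i) ^t* *m K i = 1%:M /\
    forall rho : 'M[C]_n, Lam rho = \sum_(i < k) K i *m rho *m (K i) ^t*.

Definition unitary_channel (U : 'M[C]_n) (rho : 'M[C]_n) : 'M[C]_n :=
  U *m rho *m U ^t*.

(* eigenvalues (with multiplicity) of a normal matrix, sorted in decreasing
   order; beta = second largest eigenvalue (0 if n < 2) *)
Definition eigs_desc (A : 'M[C]_n) : seq C :=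
  sort (fun x y : C => y <= x) [seq spectral_diag A 0 i | i <- enum 'I_n].
Definition beta (A : 'M[C]_n) : C := nth 0 (eigs_desc A) 1.
Definition nu (A : 'M[C]_n) : C := 1 - beta A.

Definition identification_set (U : 'M[C]_n) (S : 'cV[C]_n -> Prop) : Prop :=
  forall Lam, quantum_channel Lam ->
    (forall psi, S psi -> Lam (proj psi) = unitary_channel U (proj psi)) ->
    forall rho, density rho -> Lam rho = unitary_channel U rho.

Definition Omega (m : nat) (L : 'I_m -> nat)
  (q : forall j, 'I_(L j) -> C) (E : forall j, 'I_(L j) -> 'M[C]_n)
  (j : 'I_m) : 'M[C]_n := \sum_(l < L j) q j l *: E j l.

Definition verification_protocol (U : 'M[C]_n) (m : nat)
  (psi : 'I_m -> 'cV[C]_n) (p : 'I_m -> C) (L : 'I_m -> nat)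
  (q : forall j, 'I_(L j) -> C) (E : forall j, 'I_(L j) -> 'M[C]_n) : Prop :=
  (forall j, pure_state (psi j)) /\
  (forall j, 0 < p j) /\
  (\sum_(j < m) p j = 1) /\
  (forall j l, psdmx (E j l) /\ psdmx (1%:M - E j l)) /\
  (forall j l, E j l *m (U *m psi j) = U *m psi j) /\
  (forall j l, 0 < q j l) /\
  (forall j, \sum_(l < L j) q j l = 1).

Definition passes_all (m : nat) (psi : 'I_m -> 'cV[C]_n) (Om : 'I_m -> 'M[C]_n)
  (Lam : 'M[C]_n -> 'M[C]_n) : Prop :=
  forall j, \tr (Om j *m Lam (proj (psi j))) = 1.

Definition verified_reliably (U : 'M[C]_n) (m : nat) (psi : 'I_m -> 'cV[C]_n)
  (Om : 'I_m -> 'M[C]_n) : Prop :=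
  passes_all psi Om (unitary_channel U) /\
  forall Lam, quantum_channel Lam -> passes_all psi Om Lam ->
    forall rho : 'M[C]_n, Lam rho = unitary_channel U rho.

Definition test_set (m : nat) (psi : 'I_m -> 'cV[C]_n) : 'cV[C]_n -> Prop :=
  fun phi => exists j, phi = psi j.
Definition eff_test_set (m : nat) (psi : 'I_m -> 'cV[C]_n)
  (Om : 'I_m -> 'M[C]_n) : 'cV[C]_n -> Prop :=
  fun phi => exists j, phi = psi j /\ 0 < nu (Om j).
Definition ordinary (m : nat) (Om : 'I_m -> 'M[C]_n) : Prop :=
  forall j, 0 < nu (Om j).

End QDefs.

From mathcomp Require Import all_boot all_order all_algebra.
Import Order.TTheory GRing.Theory Num.Theory.
Local Open Scope ring_scope.
Local Open Scope sesquilinear_scope.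

Set Implicit Arguments.
Unset Strict Implicit.
Unset Printing Implicit Defensive.

(* Reliable verification gives identification at once: a channel that agrees
   with U on the test states passes every test exactly as U does.
   Conversely, let a channel pass every test and write its output on
   |psi_j><psi_j| as sum_i |w_i><w_i| using a Kraus form.  Passing test j with
   certainty means sum_i <w_i|(1 - Omega_j)|w_i> = 0, and as Omega_j <= 1 every
   w_i lies in the eigenspace of Omega_j for the eigenvalue 1.  When nu_j > 0
   this eigenvalue is simple, so the eigenspace is the line through U|psi_j>
   and the output is U|psi_j><psi_j|U^dagger.  Identification by the effective
   test states then gives the unitary channel on density operators, and
   linearity extends this to all operators, which density operators span by
   polarization.  In an ordinary protocol every test state is effective. *)

Lemma sort_ge_nth1_max (R : numDomainType) (x : R) (s : seq R) :
  x \is Num.real -> all (fun y => y <= x) s -> (1 < count_mem x s)%N ->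
  nth 0 (sort (fun y z : R => z <= y) s) 1 = x.
Proof.
move=> xR s_le x_twice; set geT := fun y z : R => z <= y.
have geT_trans : transitive geT by move=> b a c ab bc; exact: le_trans bc ab.
have sorted_s : sorted geT (sort geT s).
  apply: (@sort_sorted_in _ [pred y : R | y \is Num.real]).
    by move=> y z yR zR; rewrite /geT orbC real_leVge.
  by apply/allP => y /(allP s_le) y_le; rewrite inE (ler_real y_le).
have count_s : count_mem x (sort geT s) = count_mem x s.
  by apply/permP; rewrite perm_sort.
have sort_le : all (fun y => y <= x) (sort geT s) by rewrite all_sort.
move: sorted_s sort_le x_twice; rewrite -count_s.
case: (sort geT s) => [|x0 [|x1 r]] //=; first by case: (x0 == x).
move=> /andP[_ path_r] /and3P[_ x1_le _] x_twice.
have x_in : x \in x1 :: r.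
  rewrite -has_pred1 has_count; move: x_twice.
  by case: (x0 == x); rewrite ?add0n // => /ltnW.
apply/le_anti; rewrite x1_le /=.
move: x_in; rewrite inE => /predU1P[-> //|x_r].
exact: (allP (order_path_min geT_trans path_r)).
Qed.

Lemma cV_support1_colinear (F : fieldType) n (u f : 'cV[F]_n) (k0 : 'I_n) :
  (forall k, k != k0 -> u k 0 = 0) -> (forall k, k != k0 -> f k 0 = 0) ->
  f k0 0 != 0 -> u = (u k0 0 / f k0 0) *: f.
Proof.
move=> u0 f0 fk0; apply/matrixP => k j; rewrite ord1 mxE.
by have [->|kk0] := eqVneq k k0; [rewrite divfK | rewrite (u0 k) ?(f0 k) ?mulr0].
Qed.

Lemma trmxC_mul (C : numClosedFieldType) m k p (A : 'M[C]_(m, k)) (B : 'M[C]_(k, p)) :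
  (A *m B)^t* = B^t* *m A^t*.
Proof. by rewrite trmx_mul map_mxM. Qed.

Section Hilbert.
Variables (C : numClosedFieldType) (n : nat).
Implicit Types (A B M U : 'M[C]_n) (u v w : 'cV[C]_n) (Lam : 'M[C]_n -> 'M[C]_n).

Definition quad A v : C := (v^t* *m A *m v) 0 0.

Lemma cnorm2E v : (v^t* *m v) 0 0 = \sum_k `|v k 0| ^+ 2.
Proof. by rewrite mxE; apply: eq_bigr => k _; rewrite !mxE normCK mulrC. Qed.

Lemma cnorm2_ge0 v : 0 <= (v^t* *m v) 0 0.
Proof. by rewrite cnorm2E; apply: sumr_ge0 => k _; rewrite exprn_ge0. Qed.

Lemma cnorm2_eq0 v : (v^t* *m v) 0 0 = 0 -> v = 0.
Proof.
rewrite cnorm2E => /eqP; rewrite psumr_eq0 => [/allP v0|k _]; last exact: exprn_ge0.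
apply/matrixP => i j; rewrite ord1 mxE.
by apply/eqP; rewrite -normr_eq0 -sqrf_eq0; exact: (v0 i (mem_index_enum _)).
Qed.

Lemma quad_diag (e : 'rV[C]_n) v :
  quad (diag_mx e) v = \sum_k e 0 k * `|v k 0| ^+ 2.
Proof.
rewrite /quad mxE; apply: eq_bigr => k _; rewrite mul_mx_diag !mxE normCK.
by rewrite mulrAC mulrC [_^* * _]mulrC.
Qed.

Lemma quadB A B v : quad (A - B) v = quad A v - quad B v.
Proof.
rewrite /quad mulmxBr mulmxBl; set x := _ *m A *m v; set y := _ *m B *m v.
by rewrite !mxE.
Qed.

Lemma quad_conj (P : 'M[C]_n) M v : quad (P^t* *m M *m P) v = quad M (P *m v).
Proof. by rewrite /quad trmxC_mul !mulmxA. Qed.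

Lemma quad_conjC A v : quad (A^t*) v = (quad A v)^*.
Proof.
rewrite /quad; have -> : v^t* *m A^t* *m v = (v^t* *m A *m v)^t*.
  by rewrite !trmxC_mul trmxCK mulmxA.
by rewrite !mxE.
Qed.

Lemma mxtrace_mul_outer A u v : \tr (A *m (u *m v^t*)) = (v^t* *m A *m u) 0 0.
Proof. by rewrite mulmxA mxtrace_mulC mulmxA trace_mx11. Qed.

Lemma mxtrace_mul_proj A v : \tr (A *m proj v) = quad A v.
Proof. exact: mxtrace_mul_outer. Qed.

Lemma mxtrace_proj v : \tr (proj v) = (v^t* *m v) 0 0.
Proof. by rewrite -[proj v]mul1mx mxtrace_mul_proj /quad mulmx1. Qed.

Lemma mxtrace_proj_pure v : pure_state v -> \tr (proj v) = 1.
Proof. by rewrite mxtrace_proj => ->; rewrite mxE. Qed.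

Lemma mxtrace_mul_proj_fixed A v : A *m v = v -> pure_state v -> \tr (A *m proj v) = 1.
Proof. by move=> Av v_pure; rewrite mxtrace_mul_proj /quad -mulmxA Av v_pure mxE. Qed.

Lemma proj_scale a v : proj (a *: v) = (a * a^*) *: proj v.
Proof. by rewrite /proj linearZ /= map_mxZ -scalemxAl -scalemxAr scalerA. Qed.

Lemma proj_psd v : psdmx (proj v).
Proof.
move=> w; rewrite /proj !mulmxA -(mulmxA _ (v^t*)).
have -> : v^t* *m w = (w^t* *m v)^t* by rewrite trmxC_mul trmxCK.
set a := w^t* *m v.
by rewrite mxE big_ord1 !mxE -normCK exprn_ge0.
Qed.

Lemma outer_polarization {V : lmodType C} (f : 'M[C]_n -> V) :
  linear f -> (forall v, f (proj v) = 0) -> forall u v, f (u *m v^t*) = 0.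
Proof.
move=> f_lin f_proj0 u v.
have fZ a M : f (a *: M) = a *: f M := GRing.scalable_linear f_lin a M.
have fD M N : f (M + N) = f M + f N := (GRing.semilinear_linear f_lin).2 M N.
have proj_uv a : proj (u + a *: v) = proj u + a^* *: (u *m v^t*) + a *: (v *m u^t*)
                                     + (a * a^*) *: proj v.
  rewrite /proj linearD linearZ /= map_mxD map_mxZ mulmxDl !mulmxDr.
  by rewrite -!scalemxAl -!scalemxAr scalerA !addrA.
have f_sum a : a^* *: f (u *m v^t*) + a *: f (v *m u^t*) = 0.
  have := f_proj0 (u + a *: v); rewrite proj_uv !fD !fZ !f_proj0.
  by rewrite scaler0 add0r addr0.
have := f_sum 1; rewrite conjC1 !scale1r => /eqP; rewrite addr_eq0 => /eqP vu.
have := f_sum 'i; rewrite vu conjCi scaleNr scalerN opprK -scalerDl => /eqP.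
by rewrite scaler_eq0 -mulr2n mulrn_eq0 /= (negbTE (neq0Ci C)) => /eqP ->; rewrite oppr0.
Qed.

Lemma trmxC_delta (i : 'I_n) : (delta_mx i 0 : 'cV[C]_n)^t* = delta_mx 0 i.
Proof.
apply/matrixP => a b; rewrite !mxE.
by case: eqP; case: eqP => //= _ _; rewrite ?conjC1 ?conjC0.
Qed.

Lemma psdmx_herm A : psdmx A -> A^t* = A.
Proof.
move=> A_psd; apply/eqP; rewrite -subr_eq0; apply/eqP; set B := A^t* - A.
pose f (M : 'M[C]_n) : C^o := \tr (B *m M).
have f_lin : linear f by move=> a M N; rewrite /f mulmxDr -scalemxAr mxtraceD mxtraceZ.
have f_proj0 v : f (proj v) = 0.
  have : quad A v \is Num.real by rewrite realE A_psd.
  by rewrite /f mxtrace_mul_proj quadB quad_conjC => /CrealP ->; rewrite subrr.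
apply/matrixP => i j; rewrite mxE.
have := outer_polarization f_lin f_proj0 (delta_mx j 0) (delta_mx i 0).
by rewrite /f mxtrace_mul_outer trmxC_delta -rowE -colE !mxE.
Qed.

Lemma linear_eq_on_density {V : lmodType C} (f g : 'M[C]_n -> V) :
  linear f -> linear g -> (forall rho, density rho -> f rho = g rho) ->
  forall A, f A = g A.
Proof.
move=> f_lin g_lin fg_density.
pose h A := f A - g A.
have h_lin : linear h.
  by move=> a A B; rewrite /h f_lin g_lin /= scalerBr opprD addrACA.
have hZ a M : h (a *: M) = a *: h M := GRing.scalable_linear h_lin a M.
have hD M N : h (M + N) = h M + h N := (GRing.semilinear_linear h_lin).2 M N.
have h0 : h 0 = 0 by rewrite -(scale0r 0) hZ scale0r.
have h_proj0 v : h (proj v) = 0.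
  have [->|v_neq0] := eqVneq v 0; first by rewrite /proj mul0mx.
  set c := (v^t* *m v) 0 0.
  have c_neq0 : c != 0 by apply: contra_neq v_neq0; exact: cnorm2_eq0.
  have rho_density : density (c^-1 *: proj v).
    split; last by rewrite mxtraceZ mxtrace_proj mulVf.
    move=> w; rewrite -scalemxAr -scalemxAl mxE mulr_ge0 ?proj_psd //.
    by rewrite invr_ge0 cnorm2_ge0.
  by rewrite -[proj v](scalerKV c_neq0) hZ /h fg_density // subrr scaler0.
move=> A; apply/eqP; rewrite -subr_eq0; apply/eqP; rewrite -/(h A) [A]matrix_sum_delta.
elim/big_ind: _ => // [M N hM hN|i _]; first by rewrite hD hM hN addr0.
elim/big_ind: _ => // [M N hM hN|j _]; first by rewrite hD hM hN addr0.
rewrite hZ -(mul_delta_mx (0 : 'I_1)) -trmxC_delta.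
by rewrite (outer_polarization h_lin h_proj0) scaler0.
Qed.

Lemma psdmx_sum k (c : 'I_k -> C) (M : 'I_k -> 'M[C]_n) :
  (forall i, 0 <= c i) -> (forall i, psdmx (M i)) -> psdmx (\sum_i c i *: M i).
Proof.
move=> c_ge0 M_psd v; rewrite mulmx_sumr mulmx_suml summxE; apply: sumr_ge0 => i _.
by rewrite -scalemxAr -scalemxAl mxE mulr_ge0 ?c_ge0 ?M_psd.
Qed.

Lemma quantum_channel_linear Lam : quantum_channel Lam -> linear Lam.
Proof.
move=> [k [K [_ LamE]]] a A B; rewrite !LamE scaler_sumr -big_split /=.
by apply: eq_bigr => i _; rewrite mulmxDr mulmxDl -scalemxAr -scalemxAl.
Qed.

Lemma unitary_channel_linear U : linear (unitary_channel U).
Proof.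
by move=> a A B; rewrite /unitary_channel mulmxDr mulmxDl -scalemxAr -scalemxAl.
Qed.

Lemma quantum_channel_trace Lam A : quantum_channel Lam -> \tr (Lam A) = \tr A.
Proof.
move=> [k [K [K_sum LamE]]]; rewrite LamE raddf_sum /=.
under eq_bigr do rewrite mxtrace_mulC mulmxA.
by rewrite -raddf_sum /= -mulmx_suml K_sum mul1mx.
Qed.

Lemma quantum_channel_proj Lam v : quantum_channel Lam ->
  exists k (w : 'I_k -> 'cV[C]_n), Lam (proj v) = \sum_i proj (w i).
Proof.
move=> [k [K [_ LamE]]]; exists k, (fun i => K i *m v); rewrite LamE.
by apply: eq_bigr => i _; rewrite /proj trmxC_mul !mulmxA.
Qed.

Lemma unitary_channel_proj U v : unitary_channel U (proj v) = proj (U *m v).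
Proof. by rewrite /unitary_channel /proj trmxC_mul !mulmxA. Qed.

Lemma unitary_pure U v : U \is unitarymx -> pure_state v -> pure_state (U *m v).
Proof.
move=> U_unitary v_pure; rewrite /pure_state trmxC_mul mulmxA -(mulmxA _ (U^t*)).
have -> : U^t* *m U = 1%:M by rewrite -[U^t*]mul1mx mulmxKtV.
by rewrite mulmx1 v_pure.
Qed.

End Hilbert.

Section TopEigenvalue.
Variables (C : numClosedFieldType) (n : nat) (Om : 'M[C]_n).
Hypothesis Om_le1 : psdmx (1%:M - Om).
Implicit Types (psi phi w x : 'cV[C]_n) (Lam : 'M[C]_n -> 'M[C]_n).
Local Notation P := (spectralmx Om).
Local Notation d := (spectral_diag Om).

Let PPt : P *m P^t* = 1%:M := unitarymxP (spectral_unitarymx Om).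

Let PtP : P^t* *m P = 1%:M.
Proof. by rewrite -[P^t*]mul1mx mulmxKtV ?spectral_unitarymx. Qed.

Lemma spectralE : Om = P^t* *m diag_mx d *m P.
Proof.
have Om_herm : Om^t* = Om.
  by have := psdmx_herm Om_le1; rewrite linearB /= map_mxB trmx1 map_mx1 => /subrI.
rewrite -invmx_unitary ?spectral_unitarymx //; apply/orthomx_spectralP.
by rewrite qualifE Om_herm.
Qed.

Lemma quad1B_spectral x :
  quad (1%:M - Om) x = \sum_k (1 - d 0 k) * `|(P *m x) k 0| ^+ 2.
Proof.
have -> : 1%:M - Om = P^t* *m diag_mx (const_mx 1 - d) *m P.
  by rewrite linearB /= diag_const_mx mulmxBr mulmxBl mulmx1 PtP -spectralE.
by rewrite quad_conj quad_diag; apply: eq_bigr => k _; rewrite !mxE.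
Qed.

Lemma spectral_diag_le1 k : d 0 k <= 1.
Proof.
have : 0 <= quad (1%:M - Om) (P^t* *m delta_mx k 0) := Om_le1 _.
rewrite quad1B_spectral mulmxA PPt mul1mx.
rewrite (bigD1 k) //= big1 ?addr0 => [|j /negbTE jk].
  by rewrite mxE !eqxx normr1 expr1n mulr1 subr_ge0.
by rewrite mxE jk normr0 expr0n mulr0.
Qed.

Lemma fixed_spectral_support phi k : Om *m phi = phi -> d 0 k != 1 -> (P *m phi) k 0 = 0.
Proof.
move=> phi_fixed dk1.
have : diag_mx d *m (P *m phi) = P *m phi.
  have /(congr1 (mulmx P)) := spectralE.
  rewrite !mulmxA PPt mul1mx => <-.
  by rewrite -mulmxA phi_fixed.
move/matrixP/(_ k 0); rewrite mul_diag_mx mxE => /eqP.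
by rewrite -subr_eq0 -{2}[(P *m phi) k 0]mul1r -mulrBl mulf_eq0 subr_eq0 (negbTE dk1) => /eqP.
Qed.

Lemma quad1B_eq0_spectral_support w k :
  quad (1%:M - Om) w = 0 -> d 0 k != 1 -> (P *m w) k 0 = 0.
Proof.
rewrite quad1B_spectral => /eqP; rewrite psumr_eq0 => [/allP w0 dk1|j _]; last first.
  by rewrite mulr_ge0 ?exprn_ge0 // subr_ge0 spectral_diag_le1.
move: (w0 k (mem_index_enum _)); rewrite /= mulf_eq0 subr_eq0 eq_sym (negbTE dk1) /=.
by rewrite sqrf_eq0 normr_eq0 => /eqP.
Qed.

Lemma spectral_diag_eq1_uniq k k' : 0 < nu Om -> d 0 k = 1 -> d 0 k' = 1 -> k = k'.
Proof.
move=> nu_gt0 dk dk'; apply/eqP/negPn/negP => kk'.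
have : beta Om = 1.
  apply: sort_ge_nth1_max; first exact: real1.
    by apply/allP => _ /mapP[i _ ->]; exact: spectral_diag_le1.
  have : (1 < #|[pred i : 'I_n | d 0%R i == 1%R]|)%N.
    by apply/card_gt1P; exists k, k'; rewrite !inE dk dk' eqxx.
  by rewrite cardE size_filter count_map enumT.
by move=> beta1; move: nu_gt0; rewrite /nu beta1 subrr ltxx.
Qed.

Lemma quad1B_eq0_colinear phi w : pure_state phi -> Om *m phi = phi -> 0 < nu Om ->
  quad (1%:M - Om) w = 0 -> w = (phi^t* *m w) 0 0 *: phi.
Proof.
move=> phi_pure phi_fixed nu_gt0 w_null.
set f := P *m phi; set u := P *m w.
have [k0 fk0|f0] := pickP (fun k => f k 0 != 0); last first.
  have : f^t* *m f = 1%:M by rewrite /f trmxC_mul mulmxA -(mulmxA _ (P^t*)) PtP mulmx1.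
  have -> : f = 0.
    by apply/matrixP => k j; rewrite ord1 [RHS]mxE; apply/eqP/negbFE; exact: f0.
  by rewrite mulmx0 => /matrixP/(_ 0 0)/eqP; rewrite !mxE eq_sym oner_eq0.
have dk0 : d 0 k0 = 1.
  by apply/eqP; apply: contraNT fk0 => /(fixed_spectral_support phi_fixed) ->.
have others k : k != k0 -> d 0 k != 1.
  by apply: contraNneq => /(spectral_diag_eq1_uniq nu_gt0) /(_ dk0) ->.
pose a := u k0 0 / f k0 0.
have u_colinear : u = a *: f.
  apply: cV_support1_colinear fk0 => k /others.
    exact: quad1B_eq0_spectral_support.
  exact: fixed_spectral_support.
have w_colinear : w = a *: phi.
  by rewrite -[w]mul1mx -PtP -mulmxA -/u u_colinear -scalemxAr /f mulmxA PtP mul1mx.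
by rewrite {2}w_colinear -scalemxAr phi_pure scalemx1 mxE eqxx mulr1n -w_colinear.
Qed.

Lemma pass_certain_proj Lam psi phi : quantum_channel Lam -> pure_state psi ->
  pure_state phi -> Om *m phi = phi -> 0 < nu Om ->
  \tr (Om *m Lam (proj psi)) = 1 -> Lam (proj psi) = proj phi.
Proof.
move=> Lam_chan psi_pure phi_pure phi_fixed nu_gt0.
have : \tr (Lam (proj psi)) = 1 by rewrite quantum_channel_trace // mxtrace_proj_pure.
have [k [w ->]] := quantum_channel_proj psi Lam_chan => tr_out pass.
have w_null i : quad (1%:M - Om) (w i) = 0.
  have : \sum_i quad (1%:M - Om) (w i) = 0.
    rewrite -(eq_bigr _ (fun i _ => mxtrace_mul_proj _ (w i))) -raddf_sum /=.
    by rewrite -mulmx_sumr mulmxBl mul1mx linearB /= tr_out pass subrr.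
  move/eqP; rewrite psumr_eq0 => [/allP/(_ i (mem_index_enum _))/eqP //|j _].
  exact: Om_le1.
have proj_w i : proj (w i) = \tr (proj (w i)) *: proj phi.
  rewrite (quad1B_eq0_colinear phi_pure phi_fixed nu_gt0 (w_null i)) proj_scale.
  by rewrite mxtraceZ mxtrace_proj_pure // mulr1.
by rewrite (eq_bigr _ (fun i _ => proj_w i)) -scaler_suml -raddf_sum /= tr_out scale1r.
Qed.

End TopEigenvalue.

Lemma Omega_fixed (C : numClosedFieldType) n m (L : 'I_m -> nat)
    (q : forall j, 'I_(L j) -> C) (E : forall j, 'I_(L j) -> 'M[C]_n) j (v : 'cV[C]_n) :
  (forall l, E j l *m v = v) -> \sum_l q j l = 1 -> Omega q E j *m v = v.
Proof.
move=> E_fixed q_sum1; rewrite /Omega mulmx_suml.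
under eq_bigr do rewrite -scalemxAl E_fixed.
by rewrite -scaler_suml q_sum1 scale1r.
Qed.

Lemma Omega_le1 (C : numClosedFieldType) n m (L : 'I_m -> nat)
    (q : forall j, 'I_(L j) -> C) (E : forall j, 'I_(L j) -> 'M[C]_n) j :
  (forall l, 0 <= q j l) -> (forall l, psdmx (1%:M - E j l)) -> \sum_l q j l = 1 ->
  psdmx (1%:M - Omega q E j).
Proof.
move=> q_ge0 E_le1 q_sum1.
have -> : 1%:M - Omega q E j = \sum_l q j l *: (1%:M - E j l).
  rewrite /Omega; under [RHS]eq_bigr do rewrite scalerBr.
  by rewrite sumrB -scaler_suml q_sum1 scale1r.
exact: psdmx_sum.
Qed.

Section Protocol.
Variables (C : numClosedFieldType) (n : nat) (U : 'M[C]_n).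
Variables (m : nat) (psi : 'I_m -> 'cV[C]_n).
Implicit Types (Om : 'I_m -> 'M[C]_n) (S T : 'cV[C]_n -> Prop).

Lemma identification_set_sub S T :
  (forall phi, S phi -> T phi) -> identification_set U S -> identification_set U T.
Proof. by move=> ST S_id Lam Lam_chan T_agree; apply: S_id => // phi /ST /T_agree. Qed.

Lemma identification_of_reliable Om :
  verified_reliably U psi Om -> identification_set U (test_set psi).
Proof.
move=> [U_pass reliable] Lam Lam_chan agree rho _; apply: reliable => // j.
by rewrite agree; [exact: U_pass | exists j].
Qed.

Lemma reliable_of_eff_identification Om :
  U \is unitarymx -> (forall j, pure_state (psi j)) ->
  (forall j, psdmx (1%:M - Om j)) -> (forall j, Om j *m (U *m psi j) = U *m psi j) ->
  identification_set U (eff_test_set psi Om) -> verified_reliably U psi Om.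
Proof.
move=> U_unitary psi_pure Om_le1 Om_fixed eff_id.
have Upsi_pure j : pure_state (U *m psi j) := unitary_pure U_unitary (psi_pure j).
have U_pass : passes_all psi Om (unitary_channel U).
  by move=> j; rewrite unitary_channel_proj mxtrace_mul_proj_fixed.
split=> // Lam Lam_chan Lam_pass.
apply: linear_eq_on_density; [exact: quantum_channel_linear | exact: unitary_channel_linear |].
apply: eff_id => // _ [j [-> nu_gt0]].
rewrite unitary_channel_proj.
exact (pass_certain_proj (Om_le1 j) Lam_chan (psi_pure j) (Upsi_pure j) (Om_fixed j) nu_gt0
  (Lam_pass j)).
Qed.

End Protocol.

Theorem lemma1 (C : numClosedFieldType) (n : nat) (U : 'M[C]_n)
  (m : nat) (psi : 'I_m -> 'cV[C]_n) (p : 'I_m -> C) (L : 'I_m -> nat)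
  (q : forall j, 'I_(L j) -> C) (E : forall j, 'I_(L j) -> 'M[C]_n) :
  U \is unitarymx ->
  verification_protocol U psi p q E ->
  let Om := Omega q E in
  [/\ (verified_reliably U psi Om -> identification_set U (test_set psi)),
      (identification_set U (eff_test_set psi Om) -> verified_reliably U psi Om) &
      (ordinary Om ->
        (verified_reliably U psi Om <-> identification_set U (test_set psi)))].
Proof.
move=> U_unitary [psi_pure [_ [_ [E_bounds [E_fixed [q_gt0 q_sum1]]]]]] Om.
have Om_le1 j : psdmx (1%:M - Om j).
  apply: Omega_le1 (q_sum1 j) => l; [exact: ltW | by case: (E_bounds j l)].
have Om_fixed j : Om j *m (U *m psi j) = U *m psi j by exact: Omega_fixed.
have eff_reliable := reliable_of_eff_identification U_unitary psi_pure Om_le1 Om_fixed.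
split=> [|//|Om_ordinary]; first exact: identification_of_reliable.
split=> [|test_id]; first exact: identification_of_reliable.
by apply/eff_reliable/(identification_set_sub _ test_id) => _ [j ->]; exists j.
Qed.
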